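(* Let $M(i)$ be a maximal matching of $G(i)$ and let $V_{cover}(i)$ be the set of endpoints of edges of $M(i)$, which is a $2$-approximate minimum vertex cover of $G(i)$. If $i\le j\le i+\frac14|M(i)|$, then $V_{cover}(i\rightarrow j)$ is a $5$-approximation to the minimum vertex cover of $G(j)$.
   Context: A graph undergoes a sequence of updates numbered $1,2,\dots$, each inserting or deleting one edge; $G(i)$ is the graph after the $i$-th update. A matching is maximal if no edge of the graph has both endpoints unmatched. $V_{cover}(i\rightarrow j)$ is obtained from $V_{cover}(i)$ by adding all endpoints of edges inserted during updates $i+1,\dots,j$; it is a vertex cover of $G(j)$. A set is an $\alpha$-approximation to the minimum vertex cover if it is a vertex cover of size at most $\alpha$ times the minimum vertex cover size. *)

From mathcomp Require Import all_boot.
Set Implicit Arguments. Unset Strict Implicit. Unset Printing Implicit Defensive.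

Definition simple_graph (T : finType) (G : {set {set T}}) : Prop :=
  forall e, e \in G -> #|e| = 2.

Record update (T : finType) := Update { upd_ins : bool; upd_edge : {set T} }.

Definition apply_update (T : finType) (u : update T) (G : {set {set T}}) :=
  if upd_ins u then G :|: [set upd_edge u] else G :\ upd_edge u.

Definition valid_update (T : finType) (u : update T) (G : {set {set T}}) : Prop :=
  #|upd_edge u| = 2 /\
  (if upd_ins u then upd_edge u \notin G else upd_edge u \in G).

Definition endpoints (T : finType) (M : {set {set T}}) : {set T} :=
  \bigcup_(e in M) e.

Definition is_matching (T : finType) (G M : {set {set T}}) : Prop :=
  M \subset G /\
  (forall e f, e \in M -> f \in M -> e != f -> [disjoint e & f]).

Definition is_maximal_matching (T : finType) (G M : {set {set T}}) : Prop :=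
  is_matching G M /\
  (forall e, e \in G -> ~~ (e \subset ~: endpoints M)).

Definition is_vertex_cover (T : finType) (G : {set {set T}}) (C : {set T}) : bool :=
  [forall e in G, e :&: C != set0].

Definition min_vc_size (T : finType) (G : {set {set T}}) : nat :=
  \big[minn/#|T|]_(C : {set T} | is_vertex_cover G C) #|C|.

Definition vc_approx (T : finType) (alpha : nat) (G : {set {set T}}) (C : {set T}) : Prop :=
  is_vertex_cover G C /\ #|C| <= alpha * min_vc_size G.

(* V_cover(i -> j): Vc plus all endpoints of edges inserted during
   updates i+1, ..., j (update k transforms G(k-1) into G(k)). *)
Definition cover_ext (T : finType) (upd : nat -> update T) (Vc : {set T}) (i j : nat)
  : {set T} :=
  Vc :|: \bigcup_(i.+1 <= k < j.+1 | upd_ins (upd k)) upd_edge (upd k).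

From mathcomp Require Import all_boot zify.

Set Implicit Arguments. Unset Strict Implicit.

(* Write d = j - i. Every update deletes at most one edge of M and inserts at
   most two new cover vertices, so V_cover(i -> j) has at most 2|M| + 2d
   vertices, while the edges of M still present in G(j) form a matching of
   size at least |M| - d, which bounds every vertex cover from below.
   Since 4d <= |M|, we get 2|M| + 2d <= 5(|M| - d). *)

Section StaticGraphs.
Variable T : finType.
Implicit Types (G M N : {set {set T}}) (C : {set T}).

Lemma card_endpoints M : simple_graph M -> #|endpoints M| <= 2 * #|M|.
Proof.
move=> simM; apply: leq_trans (leq_card_cover M) _.
by rewrite (eq_bigr (fun=> 2)) // sum_nat_const mulnC.
Qed.

Lemma setT_vertex_cover G : simple_graph G -> is_vertex_cover G setT.
Proof.
by move=> simG; apply/forall_inP => e Ge; rewrite setIT -card_gt0 simG.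
Qed.

Lemma maximal_matching_vertex_cover G M :
  is_maximal_matching G M -> is_vertex_cover G (endpoints M).
Proof.
case=> _ maxM; apply/forall_inP => e Ge; apply: contra (maxM e Ge) => /eqP eM0.
by rewrite -disjoints_subset -setI_eq0 eM0.
Qed.

Lemma matching_setI G G' M : is_matching G M -> is_matching G' (M :&: G').
Proof.
case=> _ disjM; split; first exact: subsetIr.
by move=> e f /setIP[Me _] /setIP[Mf _]; apply: disjM.
Qed.

(* Each edge of [N] meets [C]; choosing one such vertex per edge is injective
   because the edges of [N] are disjoint. *)
Lemma matching_card_le_vertex_cover G N C :
  is_matching G N -> is_vertex_cover G C -> #|N| <= #|C|.
Proof.
case=> sNG disjN /forall_inP coverC.
have pick_cover e : e \in N -> exists2 x, [pick x in e :&: C] = Some x & x \in e :&: C.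
  move=> Ne; case: pickP => [x eCx | none]; first by exists x.
  by case/set0Pn: (coverC e (subsetP sNG e Ne)) => x; rewrite none.
pose f e := [pick x in e :&: C].
have injf : {in N &, injective f}.
  move=> e e' Ne Ne' fee'; apply/eqP/negPn/negP => /(disjN e e' Ne Ne') disj.
  have [x fx /setIP[ex _]] := pick_cover e Ne; have [x' fx' /setIP[ex' _]] := pick_cover e' Ne'.
  move: fee' ex'; rewrite /f fx fx' => -[<-].
  by rewrite (disjointFr disj ex).
rewrite -(card_in_imset injf) -(card_imset C (@Some_inj _)).
apply/subset_leq_card/subsetP => _ /imsetP[e Ne ->].
have [x fx /setIP[_ Cx]] := pick_cover e Ne.
by rewrite /f fx; apply: imset_f.
Qed.

Lemma matching_card_le_min_vc G N :
  simple_graph G -> is_matching G N -> #|N| <= min_vc_size G.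
Proof.
move=> simG matchN; rewrite /min_vc_size.
apply: (big_ind (fun m => #|N| <= m)).
- by rewrite -cardsT; apply: matching_card_le_vertex_cover matchN (setT_vertex_cover simG).
- by move=> m n; rewrite leq_min => -> ->.
- by move=> C; apply: matching_card_le_vertex_cover matchN.
Qed.

End StaticGraphs.

Section DynamicGraph.
Variables (T : finType) (G : nat -> {set {set T}}) (upd : nat -> update T).
Hypothesis valid_upd : forall k, valid_update (upd k.+1) (G k).
Hypothesis G_step : forall k, G k.+1 = apply_update (upd k.+1) (G k).

Lemma simple_graph_at : simple_graph (G 0) -> forall k, simple_graph (G k).
Proof.
move=> simG0; elim=> [//|k simGk] e; rewrite G_step /apply_update.
have [card_upd _] := valid_upd k.
by case: ifP => _; rewrite !inE; [case/orP=> [/simGk|/eqP->] | case/andP=> _ /simGk].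
Qed.

Definition inserted_vertices i j : {set T} :=
  \bigcup_(i.+1 <= k < j.+1 | upd_ins (upd k)) upd_edge (upd k).

Lemma inserted_vertices_id i : inserted_vertices i i = set0.
Proof. exact: big_geq. Qed.

Lemma inserted_verticesS i j : i <= j ->
  inserted_vertices i j.+1 =
  inserted_vertices i j :|: (if upd_ins (upd j.+1) then upd_edge (upd j.+1) else set0).
Proof. by move=> le_ij; rewrite /inserted_vertices big_mkcond big_nat_recr //= -big_mkcond. Qed.

Lemma card_inserted_vertices i j : i <= j -> #|inserted_vertices i j| <= 2 * (j - i).
Proof.
move=> /subnK <-; rewrite addnK; elim: (j - i) => [|d IHd].
  by rewrite inserted_vertices_id cards0.
rewrite addSn inserted_verticesS ?leq_addl //; apply: leq_trans (leq_card_setU _ _) _.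
rewrite mulnS addnC leq_add //.
by case: ifP => _; [case: (valid_upd (d + i)) => -> | rewrite cards0].
Qed.

Lemma edge_old_or_inserted i j e : i <= j -> e \in G j ->
  e \in G i \/ e \subset inserted_vertices i j.
Proof.
move=> /subnK <-; elim: (j - i) e => [|d IHd] e; first by left.
rewrite addSn G_step /apply_update inserted_verticesS ?leq_addl //.
case: ifP => _; rewrite !inE.
- case/orP=> [/IHd[old|sub]|/eqP->]; first by left.
    by right; apply: subset_trans sub (subsetUl _ _).
  by right; apply: subsetUr.
- case/andP=> _ /IHd[old|sub]; first by left.
  by right; apply: subset_trans sub (subsetUl _ _).
Qed.

Lemma card_lost_edges (A : {set {set T}}) i j : i <= j ->
  #|A :\: G j| <= #|A :\: G i| + (j - i).
Proof.
move=> /subnK <-; rewrite addnK; elim: (j - i) => [|d IHd]; first by rewrite addn0.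
have lostS : A :\: G (d + i).+1 \subset upd_edge (upd (d + i).+1) |: (A :\: G (d + i)).
  apply/subsetP => e; rewrite G_step /apply_update.
  by case: ifP => _; rewrite !inE; case: (e \in G _); case: (e == _); rewrite ?andbF ?orbT.
apply: leq_trans (subset_leq_card lostS) _; rewrite cardsU1 addnS -add1n.
exact: leq_add (leq_b1 _) IHd.
Qed.

Lemma cover_ext_vertex_cover i j M : simple_graph (G 0) ->
  is_maximal_matching (G i) M -> i <= j ->
  is_vertex_cover (G j) (cover_ext upd (endpoints M) i j).
Proof.
move=> simG0 maxM le_ij; apply/forall_inP => e Gje.
have [Gie|ins_e] := edge_old_or_inserted le_ij Gje.
  have /set0Pn[x /setIP[ex Mx]] := forall_inP (maximal_matching_vertex_cover maxM) e Gie.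
  by apply/set0Pn; exists x; rewrite /cover_ext !inE ex Mx.
rewrite (setIidPl (subset_trans ins_e (subsetUr _ _))).
by rewrite -card_gt0 (simple_graph_at simG0 Gje).
Qed.

Lemma card_cover_ext i j M : simple_graph M -> i <= j ->
  #|cover_ext upd (endpoints M) i j| <= 2 * #|M| + 2 * (j - i).
Proof.
move=> simM le_ij; apply: leq_trans (leq_card_setU _ _) _.
exact: leq_add (card_endpoints simM) (card_inserted_vertices le_ij).
Qed.

End DynamicGraph.

Theorem lemma12 (T : finType) (G : nat -> {set {set T}}) (upd : nat -> update T)
  (HG0 : simple_graph (G 0))
  (Hvalid : forall k, valid_update (upd k.+1) (G k))
  (Hstep : forall k, G k.+1 = apply_update (upd k.+1) (G k))
  (i j : nat) (M : {set {set T}})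
  (HM : is_maximal_matching (G i) M)
  (Hij : i <= j) (Hj : 4 * j <= 4 * i + #|M|) :
  vc_approx 5 (G j) (cover_ext upd (endpoints M) i j).
Proof.
have simG := simple_graph_at Hvalid Hstep HG0.
have [[sMG _] _] := HM.
have simM : simple_graph M by move=> e /(subsetP sMG); apply: simG.
have lostM : #|M :\: G j| <= j - i.
  have /eqP lost0 : M :\: G i == set0 by rewrite setD_eq0.
  by have := card_lost_edges Hstep M Hij; rewrite lost0 cards0.
have keptM := matching_card_le_min_vc (simG j) (matching_setI (G j) HM.1).
split; first exact: cover_ext_vertex_cover.
have := card_cover_ext Hvalid simM Hij; have := cardsID (G j) M; lia.
Qed.
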